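(* Let $C_4=\langle y\mid y^4=e\rangle$ and $\Delta=\{x,y,z\}$ with $x=y^2$, $z=y^3$ (so $C_\Delta(C_4)$ is the complete graph on four vertices). Then $W=W_xU_x+W_yU_y+W_zU_z$ is a homogeneous scalar quantum walk on $C_\Delta(C_4)$ whenever, for some real $\phi$ and integer $q$, $W_x=\cos\phi$, $W_y=\frac{1+i(-1)^q}{2}\sin\phi$, $W_z=-\frac{1-i(-1)^q}{2}\sin\phi$ and these values are nonzero; in particular the complete graph on four vertices admits such a walk.
   Context: The Cayley graph $C_\Delta(\Gamma)$ has vertex set $\Gamma$ and directed edges $(g,g\delta)$, $g\in\Gamma,\delta\in\Delta$. Let $\ell^2(\Gamma)$ have orthonormal basis $\{|g\rangle\}_{g\in\Gamma}$ and for $\delta\in\Gamma$ let $U_\delta|g\rangle=|g\delta\rangle$. A homogeneous scalar quantum walk on $C_\Delta(\Gamma)$ is a unitary operator $W=\sum_{\delta\in\Delta}W_\delta U_\delta$ with all complex coefficients $W_\delta$ nonzero. *)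

From HB Require Import structures.
From mathcomp Require Import all_boot all_order all_algebra.
From mathcomp Require Import complex.
From mathcomp Require Import all_classical all_reals all_analysis.
Set Implicit Arguments. Unset Strict Implicit. Unset Printing Implicit Defensive.
Import Order.TTheory GRing.Theory Num.Theory.
Local Open Scope ring_scope.
Local Open Scope complex_scope.

(* The cyclic group Z/(n+1) written additively as 'I_n.+1; l^2(Gamma) is
   C^(n+1) with basis |g>, operators are (n+1)x(n+1) complex matrices
   acting on column vectors. *)

(* Right translation U_d |g> = |g d>  (here g + d). *)
Definition Ushift (R : rcfType) (n : nat) (d : 'I_n.+1) : 'M[R[i]]_n.+1 :=
  \matrix_(h, g) ((h == g + d)%:R).

Definition adjmx (R : rcfType) (n : nat) (A : 'M[R[i]]_n.+1) : 'M[R[i]]_n.+1 :=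
  \matrix_(i, j) conjc (A j i).

Definition unitary_mx (R : rcfType) (n : nat) (A : 'M[R[i]]_n.+1) : Prop :=
  A *m adjmx A = 1%:M /\ adjmx A *m A = 1%:M.

Definition walk_op (R : rcfType) (n : nat) (Delta : seq 'I_n.+1)
  (c : 'I_n.+1 -> R[i]) : 'M[R[i]]_n.+1 :=
  \sum_(d <- Delta) c d *: Ushift R d.

Definition is_hsqw (R : rcfType) (n : nat) (Delta : seq 'I_n.+1)
  (c : 'I_n.+1 -> R[i]) : Prop :=
  uniq Delta /\ unitary_mx (walk_op Delta c) /\ (forall d, d \in Delta -> c d != 0).

Definition y4 : 'I_4 := inord 1.
Definition x4 : 'I_4 := inord 2.
Definition z4 : 'I_4 := inord 3.
Definition Delta4 : seq 'I_4 := [:: x4; y4; z4].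

Definition coeffs (R : realType) (phi : R) (q : int) : 'I_4 -> R[i] :=
  fun d =>
    if d == x4 then (cos phi)%:C
    else if d == y4 then ((1 +i* ((-1) ^ q)) / 2%:R) * (sin phi)%:C
    else if d == z4 then - (((1 -i* ((-1) ^ q)) / 2%:R) * (sin phi)%:C)
    else 0.

From HB Require Import structures.
From mathcomp Require Import all_boot all_order all_algebra.
From mathcomp Require Import complex.
From mathcomp Require Import all_classical all_reals all_analysis.
From mathcomp Require Import ring lra.
Import Order.TTheory GRing.Theory Num.Theory.
Local Open Scope ring_scope.
Local Open Scope complex_scope.

(* Since C_4 is abelian, U_d U_e^* = U_(d-e) gives
   W W^* = W^* W = sum_k (sum_(d - e = k) W_d conj(W_e)) U_k, so W is unitary as
   soon as these autocorrelations are 1 at k = 0 and vanish elsewhere.  For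
   Delta = {y^2, y, y^3}, with W_x real and W_z = - conj(W_y), this reduces to
   W_x^2 + 2 |W_y|^2 = 1 and W_y^2 + conj(W_y)^2 = 0, which hold for
   W_x = cos phi, W_y = (1 + i (-1)^q) sin phi / 2.  Taking phi = 1/2 makes all
   three coefficients nonzero. *)

Section CyclicWalk.
Variables (R : rcfType) (n : nat).
Implicit Types (d e k : 'I_n.+1) (Delta : seq 'I_n.+1) (c : 'I_n.+1 -> R[i]).

Lemma Ushift_mul d e : Ushift R d *m Ushift R e = Ushift R (d + e).
Proof.
apply/matrixP => h g; rewrite !mxE (bigD1 (g + e)) //= !mxE eqxx mulr1.
rewrite big1 ?addr0 => [|k /negPf k_neq]; last by rewrite !mxE k_neq mulr0.
by rewrite [d + e]addrC addrA.
Qed.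

Lemma adjmx_walk_op Delta c :
  adjmx (walk_op Delta c) = \sum_(d <- Delta) conjc (c d) *: Ushift R (- d).
Proof.
apply/matrixP => h g; rewrite !mxE !summxE rmorph_sum; apply: eq_bigr => d _.
by rewrite !mxE rmorphM rmorph_nat -subr_eq eq_sym.
Qed.

Lemma sum_scale_UshiftE (a : 'I_n.+1 -> R[i]) h g :
  (\sum_k a k *: Ushift R k) h g = a (h - g).
Proof.
rewrite summxE (bigD1 (h - g)) //= !mxE [g + _]addrC subrK eqxx mulr1.
rewrite big1 ?addr0 // => k /negPf k_neq; rewrite !mxE.
by rewrite addrC -subr_eq eq_sym k_neq mulr0.
Qed.

Definition walk_autocorr Delta c k : R[i] :=
  \sum_(d <- Delta) \sum_(e <- Delta | d - e == k) c d * conjc (c e).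

Lemma sum_Ushift_sub Delta c :
  \sum_(d <- Delta) \sum_(e <- Delta) (c d * conjc (c e)) *: Ushift R (d - e)
  = \sum_k walk_autocorr Delta c k *: Ushift R k.
Proof.
apply/matrixP => h g; rewrite sum_scale_UshiftE summxE /walk_autocorr.
apply: eq_bigr => d _.
rewrite summxE [RHS]big_mkcond; apply: eq_bigr => e _.
by rewrite !mxE mulr_natr mulrb [g + _]addrC -subr_eq eq_sym.
Qed.

Lemma walk_op_mul_adjmx Delta c :
  walk_op Delta c *m adjmx (walk_op Delta c)
  = \sum_k walk_autocorr Delta c k *: Ushift R k.
Proof.
rewrite -sum_Ushift_sub adjmx_walk_op /walk_op mulmx_suml; apply: eq_bigr => d _.
rewrite mulmx_sumr; apply: eq_bigr => e _.
by rewrite -scalemxAl -scalemxAr Ushift_mul scalerA.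
Qed.

(* Gamma is abelian, so W^* W has the same expansion as W W^*. *)
Lemma adjmx_mul_walk_op Delta c :
  adjmx (walk_op Delta c) *m walk_op Delta c
  = \sum_k walk_autocorr Delta c k *: Ushift R k.
Proof.
rewrite -sum_Ushift_sub adjmx_walk_op /walk_op mulmx_suml exchange_big.
apply: eq_bigr => d _; rewrite mulmx_sumr; apply: eq_bigr => e _.
by rewrite -scalemxAl -scalemxAr Ushift_mul scalerA mulrC addrC.
Qed.

Lemma walk_op_unitary Delta c :
  (forall k, walk_autocorr Delta c k = (k == 0)%:R) -> unitary_mx (walk_op Delta c).
Proof.
move=> autocorr_delta.
suff sum_delta : \sum_k walk_autocorr Delta c k *: Ushift R k = 1%:M.
  by rewrite /unitary_mx walk_op_mul_adjmx adjmx_mul_walk_op sum_delta.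
by apply/matrixP => h g; rewrite sum_scale_UshiftE autocorr_delta subr_eq0 !mxE.
Qed.

End CyclicWalk.

Lemma uniq_Delta4 : uniq Delta4.
Proof. by rewrite /= !inE -!val_eqE /= !inordK. Qed.

Lemma walk_op_Delta4_unitary (R : rcfType) (c : 'I_4 -> R[i]) :
  c x4 * conjc (c x4) + c y4 * conjc (c y4) + c z4 * conjc (c z4) = 1 ->
  c x4 * conjc (c y4) + c z4 * conjc (c x4) = 0 ->
  c y4 * conjc (c z4) + c z4 * conjc (c y4) = 0 ->
  unitary_mx (walk_op Delta4 c).
Proof.
move=> norm1 orth1 orth2; apply: walk_op_unitary => k.
(* The autocorrelation at y^3 is the conjugate of the one at y. *)
rewrite /walk_autocorr /Delta4 !big_cons !big_nil.
case: k => [[|[|[|[|//]]]] k_lt] /=.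
all: rewrite -!val_eqE /= !inordK //= !(addr0, add0r) ?addrA //.
move/(congr1 conjc): orth1; rewrite rmorph0 rmorphD !rmorphM /= !conjcK.
by rewrite addrC mulrC [conjc _ * _]mulrC.
Qed.

Lemma walk_op_Delta4_unitary_conj (R : rcfType) (c : 'I_4 -> R[i]) :
  conjc (c x4) = c x4 -> c z4 = - conjc (c y4) ->
  c x4 ^+ 2 + c y4 * conjc (c y4) *+ 2 = 1 ->
  c y4 ^+ 2 + conjc (c y4) ^+ 2 = 0 ->
  unitary_mx (walk_op Delta4 c).
Proof.
move=> cx_real cz cnorm csqr; have cz_conj : conjc (c z4) = - c y4.
  by rewrite cz rmorphN /= conjcK.
apply: walk_op_Delta4_unitary; rewrite ?cx_real ?cz_conj cz.
- by rewrite -cnorm mulNr mulrN opprK; ring.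
- by rewrite mulNr [c x4 * _]mulrC subrr.
- by rewrite mulrN mulNr -opprD -!expr2 csqr oppr0.
Qed.

Lemma sqrr_signz (R : realType) (q : int) : ((-1 : R) ^ q) ^+ 2 = 1.
Proof. by rewrite expN1r sqrr_sign. Qed.

Lemma half_complex_mul_real (R : rcfType) (x y t : R) :
  (x +i* y) / 2%:R * t%:C = (x * t / 2%:R) +i* (y * t / 2%:R).
Proof.
have two_neq0 : (2%:R : R) != 0 by rewrite pnatr_eq0.
by apply/eqP; rewrite eq_complex /= !(mulr0, mul0r, addr0, subr0, oppr0) /=;
  apply/andP; split; apply/eqP; field.
Qed.

Section Coeffs.
Variables (R : realType) (phi : R) (q : int).

Lemma coeffs_x4 : coeffs phi q x4 = (cos phi)%:C.
Proof. by rewrite /coeffs eqxx. Qed.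

Lemma coeffs_y4 : coeffs phi q y4 = ((1 +i* ((-1) ^ q)) / 2%:R) * (sin phi)%:C.
Proof. by rewrite /coeffs -!val_eqE /= !inordK. Qed.

Lemma coeffs_z4 : coeffs phi q z4 = - (((1 -i* ((-1) ^ q)) / 2%:R) * (sin phi)%:C).
Proof. by rewrite /coeffs -!val_eqE /= !inordK. Qed.

Lemma coeffs_unitary : unitary_mx (walk_op Delta4 (coeffs phi q)).
Proof.
apply: walk_op_Delta4_unitary_conj; rewrite ?coeffs_x4 ?coeffs_y4 ?coeffs_z4 ?half_complex_mul_real.
- exact: conjc_real.
- by rewrite !mulNr.
all: have := sqrr_signz R q; move: ((-1) ^ q) => s s2.
all: apply/eqP; rewrite mulr2n !expr2 eq_complex /=; apply/andP; split; apply/eqP.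
all: have := cos2Dsin2 phi; nra.
Qed.

Lemma coeffs_neq0 : cos phi != 0 -> sin phi != 0 ->
  forall d, d \in Delta4 -> coeffs phi q d != 0.
Proof.
have complex_neq0 (x y : R) : x != 0 -> x +i* y != 0.
  by move=> x_neq0; rewrite eq_complex negb_and x_neq0.
have half_neq0 (y : R) : (1 +i* y) / 2%:R != 0.
  by rewrite mulf_neq0 ?invr_eq0 ?pnatr_eq0 ?complex_neq0 ?oner_eq0.
move=> cos_neq0 sin_neq0 d; rewrite !inE => /or3P[] /eqP ->.
- by rewrite coeffs_x4; apply: complex_neq0.
- by rewrite coeffs_y4 mulf_neq0 ?half_neq0 //; apply: complex_neq0.
- by rewrite coeffs_z4 oppr_eq0 mulf_neq0 ?half_neq0 //; apply: complex_neq0.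
Qed.
End Coeffs.

Lemma exists_cos_sin_neq0 (R : realType) :
  exists2 phi : R, cos phi != 0 & sin phi != 0.
Proof.
have half_gt0 : 0 < 1 / 2 :> R by rewrite divr_gt0.
have half_lt_pihalf : 1 / 2 < pi / 2 :> R.
  by rewrite (lt_le_trans _ (pihalf_ge1 R)) // ltr_pdivrMr // mul1r ltr1n.
have Npihalf_lt_half : - (pi / 2) < 1 / 2 :> R.
  by rewrite (lt_trans _ half_gt0) // oppr_lt0 divr_gt0 ?pi_gt0.
exists (1 / 2); rewrite gt_eqF //.
- by rewrite cos_gt0_pihalf // Npihalf_lt_half.
- by rewrite sin_gt0_pihalf // half_gt0.
Qed.

Theorem mainTheorem9 (R : realType) :
  (forall (phi : R) (q : int),
      (cos phi)%:C != 0 ->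
      ((1 +i* ((-1) ^ q)) / 2%:R) * (sin phi)%:C != 0 ->
      - (((1 -i* ((-1) ^ q)) / 2%:R) * (sin phi)%:C) != 0 ->
      is_hsqw Delta4 (coeffs phi q))
  /\ (exists c : 'I_4 -> R[i], is_hsqw Delta4 c).
Proof.
have coeffs_hsqw (phi : R) q : (forall d, d \in Delta4 -> coeffs phi q d != 0) ->
    is_hsqw Delta4 (coeffs phi q).
  by move=> coeffs_neq0; split; [exact: uniq_Delta4 | split; [exact: coeffs_unitary |]].
split=> [phi q cx_neq0 cy_neq0 cz_neq0 | ].
  apply: coeffs_hsqw => d; rewrite !inE => /or3P[] /eqP ->.
  - by rewrite coeffs_x4.
  - by rewrite coeffs_y4.
  - by rewrite coeffs_z4.
have [phi cos_neq0 sin_neq0] := exists_cos_sin_neq0 R.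
by exists (coeffs phi 0); apply/coeffs_hsqw/coeffs_neq0.
Qed.
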